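(* Let $r_+,r_-\in\mathcal{R}$ with $r_+\subseteq r_-$, let $p\in\{+,-\}$, let $R$ be a relational type with $X\in^p R$, and let $\gamma$ be an environment defined on the free type variables of $R$ other than $X$. Then $\llbracket R\rrbracket_{\gamma[X\mapsto r_p]}\subseteq\llbracket R\rrbracket_{\gamma[X\mapsto r_{\bar p}]}$.
   Context: Terms are those of the pure untyped $\lambda$-calculus, up to $\alpha$-equivalence; $=_{\beta\eta}$ is $\beta\eta$-convertibility. Relational types: $R ::= X \mid R\to R' \mid \forall X.R \mid R^{\cup} \mid R\cdot R' \mid t$ (last form: promotion of a term). A relation on terms is $\beta\eta$-closed if closed under replacing either related term by a $\beta\eta$-equal one; $\mathcal{R}$ is the set of such relations; environments $\gamma$ map finitely many type variables to $\mathcal{R}$. Interpretation: $\llbracket X\rrbracket_\gamma=\gamma(X)$; $t\,\llbracket R\to R'\rrbracket_\gamma\,t'$ iff for all $a,a'$ with $a\,\llbracket R\rrbracket_\gamma\,a'$, $t\,a\,\llbracket R'\rrbracket_\gamma\,t'\,a'$; $\llbracket \forall X.R\rrbracket_\gamma=\bigcap_{r\in\mathcal{R}}\llbracket R\rrbracket_{\gamma[X\mapsto r]}$; $t\,\llbracket R^\cup\rrbracket_\gamma\,t'$ iff $t'\,\llbracket R\rrbracket_\gamma\,t$; $t\,\llbracket R\cdot R'\rrbracket_\gamma\,t'$ iff $\exists t''$, $t\,\llbracket R\rrbracket_\gamma\,t''$ and $t''\,\llbracket R'\rrbracket_\gamma\,t'$; $\llbracket \hat t\rrbracket_\gamma=\{(t,t')\mid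 \hat t\,t=_{\beta\eta}t'\}$. Polarities $p\in\{+,-\}$, $\bar p$ the other. $X\in^pR$ is defined inductively: $X\in^+X$; $X\in^pY$ for type variables $Y\ne X$; $X\in^p(R\to R')$ iff $X\in^{\bar p}R$ and $X\in^pR'$; $X\in^p\forall Y.R$ iff $X\in^pR$ (with $Y\ne X$); $X\in^p(R\cdot R')$ iff $X\in^pR$ and $X\in^pR'$; $X\in^pR^\cup$ iff $X\in^pR$; $X\in^p t$ for every promoted term $t$. *)

From Stdlib Require Import Arith Relations.

Inductive term : Type :=
| Var : nat -> term
| App : term -> term -> term
| Lam : term -> term.

Fixpoint lift (d k : nat) (t : term) : term :=
  match t with
  | Var n => if k <=? n then Var (n + d) else Var n
  | App t1 t2 => App (lift d k t1) (lift d k t2)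
  | Lam t1 => Lam (lift d (S k) t1)
  end.

Fixpoint subst (k : nat) (u : term) (t : term) : term :=
  match t with
  | Var n => if n <? k then Var n else if n =? k then lift k 0 u else Var (pred n)
  | App t1 t2 => App (subst k u t1) (subst k u t2)
  | Lam t1 => Lam (subst (S k) u t1)
  end.

Inductive step : term -> term -> Prop :=
| step_beta : forall t u, step (App (Lam t) u) (subst 0 u t)
| step_eta : forall t, step (Lam (App (lift 1 0 t) (Var 0))) t
| step_appl : forall t t' u, step t t' -> step (App t u) (App t' u)
| step_appr : forall t u u', step u u' -> step (App t u) (App t u')
| step_lam : forall t t', step t t' -> step (Lam t) (Lam t').

Definition betaeta : term -> term -> Prop := clos_refl_sym_trans term step.

Definition rel := term -> term -> Prop.

Definition be_closed (r : rel) : Prop :=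
  forall t1 t2 t1' t2', betaeta t1 t1' -> betaeta t2 t2' -> r t1 t2 -> r t1' t2'.

Inductive rtype : Type :=
| TVar : nat -> rtype
| TArr : rtype -> rtype -> rtype
| TAll : nat -> rtype -> rtype
| TConv : rtype -> rtype
| TComp : rtype -> rtype -> rtype
| TProm : term -> rtype.

Definition env := nat -> rel.

Definition update (g : env) (X : nat) (r : rel) : env :=
  fun Y => if Nat.eqb Y X then r else g Y.

Fixpoint interp (R : rtype) (g : env) : rel :=
  match R with
  | TVar X => g X
  | TArr R1 R2 => fun t t' =>
      forall a a', interp R1 g a a' -> interp R2 g (App t a) (App t' a')
  | TAll X R1 => fun t t' =>
      forall r : rel, be_closed r -> interp R1 (update g X r) t t'
  | TConv R1 => fun t t' => interp R1 g t' t
  | TComp R1 R2 => fun t t' =>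
      exists t'', interp R1 g t t'' /\ interp R2 g t'' t'
  | TProm u => fun t t' => betaeta (App u t) t'
  end.

Inductive pol : Type := Pos | Neg.

Definition flip (p : pol) : pol := match p with Pos => Neg | Neg => Pos end.

Inductive occ (X : nat) : pol -> rtype -> Prop :=
| occ_self : occ X Pos (TVar X)
| occ_other : forall p Y, Y <> X -> occ X p (TVar Y)
| occ_arr : forall p R1 R2, occ X (flip p) R1 -> occ X p R2 -> occ X p (TArr R1 R2)
| occ_all : forall p Y R1, Y <> X -> occ X p R1 -> occ X p (TAll Y R1)
  (* a binder for X itself: X is not free (alpha-rename the binder) *)
| occ_all_self : forall p R1, occ X p (TAll X R1)
| occ_comp : forall p R1 R2, occ X p R1 -> occ X p R2 -> occ X p (TComp R1 R2)
| occ_conv : forall p R1, occ X p R1 -> occ X p (TConv R1)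
| occ_prom : forall p t, occ X p (TProm t).

Definition rsel (p : pol) (rplus rminus : rel) : rel :=
  match p with Pos => rplus | Neg => rminus end.

(* An arrow reverses the polarity of
   its domain, which is exactly what the contravariance of [R -> R'] needs; a
   quantifier over Y <> X commutes with the update of X, and a quantifier over
   X itself shadows it. *)
From Stdlib Require Import Arith Relations.

Definition env_eq (g g' : env) : Prop := forall n, g n = g' n.

Lemma update_env_eq (g g' : env) (X : nat) (r : rel) :
  env_eq g g' -> env_eq (update g X r) (update g' X r).
Proof.
  intros Hg n; unfold update; destruct (n =? X); auto.
Qed.

Lemma update_comm (g : env) (X Y : nat) (a b : rel) :
  Y <> X -> env_eq (update (update g X a) Y b) (update (update g Y b) X a).
Proof.
  intros HYX n; unfold update.
  destruct (n =? Y) eqn:EY, (n =? X) eqn:EX; auto.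
  apply Nat.eqb_eq in EY, EX; subst; contradiction.
Qed.

Lemma update_shadow (g : env) (X : nat) (a b : rel) :
  env_eq (update (update g X a) X b) (update g X b).
Proof.
  intros n; unfold update; destruct (n =? X); auto.
Qed.

Lemma interp_env_eq (R : rtype) : forall g g' : env,
  env_eq g g' -> forall t t', interp R g t t' <-> interp R g' t t'.
Proof.
  induction R as [Y | R1 IH1 R2 IH2 | Y R1 IH | R1 IH | R1 IH1 R2 IH2 | u];
    intros g g' Hg t t'; simpl.
  - rewrite Hg; tauto.
  - split; intros Hf a a' Ha;
      apply (IH2 _ _ Hg), Hf, (IH1 _ _ Hg), Ha.
  - split; intros Hf r Hr;
      apply (IH _ _ (update_env_eq _ _ Y r Hg)), Hf, Hr.
  - apply IH, Hg.
  - split; intros [u [H1 H2]]; exists u; split;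
      first [apply (IH1 _ _ Hg) | apply (IH2 _ _ Hg)]; assumption.
  - tauto.
Qed.

Lemma interp_update_occ (rplus rminus : rel) :
  inclusion term rplus rminus ->
  forall (X : nat) (p : pol) (R : rtype), occ X p R -> forall g : env,
    inclusion term (interp R (update g X (rsel p rplus rminus)))
                   (interp R (update g X (rsel (flip p) rplus rminus))).
Proof.
  intros Hsub X p R Hocc.
  induction Hocc as [| p Y HYX | p R1 R2 _ IH1 _ IH2 | p Y R1 HYX _ IH | p R1
                    | p R1 R2 _ IH1 _ IH2 | p R1 _ IH | p u];
    intros g t t'; simpl.
  - unfold update; rewrite Nat.eqb_refl; apply Hsub.
  - unfold update; apply Nat.eqb_neq in HYX; rewrite HYX; auto.
  - intros Hf a a' Ha; apply IH2, Hf.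
    specialize (IH1 g a a'); destruct p; apply IH1, Ha.
  - intros Hf r Hr.
    apply (interp_env_eq _ _ _ (update_comm g X Y _ r HYX)), IH.
    apply (interp_env_eq _ _ _ (update_comm g X Y _ r HYX)), Hf, Hr.
  - intros Hf r Hr.
    apply (interp_env_eq _ _ _ (update_shadow g X (rsel (flip p) rplus rminus) r)).
    apply (interp_env_eq _ _ _ (update_shadow g X (rsel p rplus rminus) r)), Hf, Hr.
  - intros [u [H1 H2]]; exists u; split; [apply IH1 | apply IH2]; assumption.
  - apply IH.
  - auto.
Qed.

Theorem mainTheorem9 :
  forall (rplus rminus : rel),
    be_closed rplus -> be_closed rminus ->
    (forall t t', rplus t t' -> rminus t t') ->
    forall (p : pol) (R : rtype) (X : nat) (g : env),
      occ X p R ->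
      (forall Y, Y <> X -> be_closed (g Y)) ->
      forall t t',
        interp R (update g X (rsel p rplus rminus)) t t' ->
        interp R (update g X (rsel (flip p) rplus rminus)) t t'.
Proof.
  intros rplus rminus _ _ Hsub p R X g Hocc _.
  exact (interp_update_occ rplus rminus Hsub X p R Hocc g).
Qed.
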